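(* Let $I=\{T,L,R\}$ with the discrete metric and consider the initial chain $I\xrightarrow{!}FI\xrightarrow{F!}F^2I\xrightarrow{F^2!}\cdots$ of the functor $F$ on $\mathbf{Met_3}^{C}$, where $!\colon I\to FI$ is the unique morphism ($T\mapsto a\otimes T$, $L\mapsto b\otimes L$, $R\mapsto c\otimes R$). The colimit of this chain in $\mathbf{Met_3}^{C}$ is $G_\rho=(G,d_{disc})$, the colimit $G$ of the same chain in $\mathbf{Set_3}$ equipped with the discrete metric; moreover the colimit maps $F^nI\to G_\rho$ are the same as the colimit maps $F^nI\to G$ in $\mathbf{Set_3}$.
   Context: A tripointed set is a set with three distinct distinguished points $T,L,R$; $\mathbf{Set_3}$ is the category of tripointed sets with maps preserving $T,L,R$. A tripointed metric space is a tripointed set with a metric bounded by $1$ in which the three distinguished points have pairwise distance $1$. $\mathbf{Met_3}^{C}$ is the category of tripointed metric spaces with continuous maps preserving $T,L,R$. Let $M=\{a,b,c\}$. The functor $F=M\otimes-$: for a tripointed set $X$, $M\otimes X$ is the quotient of $M\times X$ (three copies of $X$) by the equivalence relation generated by $(b,T)\sim(a,L)$, $(a,R)\sim(c,T)$, $(c,L)\sim(b,R)$, elements written $m\otimes x$, distinguished points $a\otimes T$, $b\otimes L$, $c\otimes R$; on morphisms $(M\otimes f)(m\otimes x)=m\otimes f(x)$. In the metric setting $M\times X$ carries the metric $d((m,x),(n,y))=\tfrac12 d(x,y)$ if $m=n$ and $1$ otherwise, and $M\otimes X$ carries the quotient metric. The discrete metric is $d(x,y)=1$ for $x\neq y$.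 *)

From HB Require Import structures.
From mathcomp Require Import all_boot all_order all_algebra.
From mathcomp Require Import boolp classical_sets reals.
From Stdlib Require Import Relations.
Set Implicit Arguments. Unset Strict Implicit. Unset Printing Implicit Defensive.
Import Order.TTheory GRing.Theory Num.Theory.
Local Open Scope classical_set_scope.
Local Open Scope ring_scope.

Record tpset := TPSet { scar :> Type; pT : scar; pL : scar; pR : scar }.

Definition is_set3 (X : tpset) : Prop :=
  [/\ pT X <> pL X, pL X <> pR X & pT X <> pR X].

Definition hom3 (X Y : tpset) (f : X -> Y) : Prop :=
  [/\ f (pT X) = pT Y, f (pL X) = pL Y & f (pR X) = pR Y].

Inductive M := ma | mb | mc.

Section Tensor.
Variable X : tpset.

Definition glue (p q : M * X) : Prop :=
  [\/ p = (mb, pT X) /\ q = (ma, pL X),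
      p = (ma, pR X) /\ q = (mc, pT X) |
      p = (mc, pL X) /\ q = (mb, pR X)].

Definition gequiv : M * X -> M * X -> Prop := clos_refl_sym_trans _ glue.

Definition cls (p : M * X) : set (M * X) := [set q | gequiv p q].

Definition tcar : Type := {C : set (M * X) | exists p, C = cls p}.

Definition tel (m : M) (x : X) : tcar :=
  exist _ (cls (m, x)) (ex_intro _ (m, x) erefl).

Definition tens : tpset := TPSet (tel ma (pT X)) (tel mb (pL X)) (tel mc (pR X)).

End Tensor.

(* action of M (x) - on maps: (M (x) f)(m (x) x) = m (x) f(x), computed on a
   (chosen) representative of the class *)
Definition trep (X : tpset) (C : tcar X) : M * X := projT1 (cid (proj2_sig C)).

Definition tmap (X Y : tpset) (f : X -> Y) (C : tcar X) : tcar Y :=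
  @tel Y (trep C).1 (f (trep C).2).

Section Met.
Variable R : realType.

Record tpmet := TPMet { mset :> tpset; mdist : mset -> mset -> R }.

Definition is_met3 (X : tpmet) : Prop :=
  [/\ (forall x y : X, mdist x y = 0 <-> x = y),
      (forall x y : X, mdist x y = mdist y x),
      (forall x y z : X, mdist x z <= mdist x y + mdist y z),
      (forall x y : X, mdist x y <= 1) &
      [/\ mdist (pT X) (pL X) = 1, mdist (pL X) (pR X) = 1 &
          mdist (pT X) (pR X) = 1]].

Definition mcont (X Y : tpmet) (f : X -> Y) : Prop :=
  forall (x : X) (e : R), 0 < e ->
    exists2 del : R, 0 < del &
      forall y : X, mdist x y < del -> mdist (f x) (f y) < e.

Definition ddisc (T : Type) (x y : T) : R := if pselect (x = y) then 0 else 1.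

Definition dMX (X : tpmet) (p q : M * X) : R :=
  if pselect (p.1 = q.1) then mdist p.2 q.2 / 2 else 1.

(* chains x ~ p0, (p0,q0), q0 ~ p1, (p1,q1), ..., (pn,qn), qn ~ y *)
Fixpoint qchain (X : tpset) (x y : M * X) (s : seq ((M * X) * (M * X))) : Prop :=
  match s with
  | [::] => False
  | [:: pq] => gequiv x pq.1 /\ gequiv pq.2 y
  | pq :: s' => gequiv x pq.1 /\ qchain pq.2 y s'
  end.

Definition qcost (X : tpmet) (s : seq ((M * X) * (M * X))) : R :=
  \sum_(pq <- s) dMX pq.1 pq.2.

Definition qdist (X : tpmet) (C D : tcar X) : R :=
  inf [set r | exists (x y : M * X) (s : seq ((M * X) * (M * X))),
         [/\ sval C x, sval D y, qchain x y s & r = qcost s]].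

Definition Fobj (X : tpmet) : tpmet := @TPMet (tens X) (@qdist X).

Inductive TLR := iT | iL | iR.
Definition Iset : tpset := TPSet iT iL iR.
Definition Imet : tpmet := @TPMet Iset (@ddisc TLR).

Fixpoint Fn (n : nat) : tpmet :=
  match n with 0 => Imet | n'.+1 => Fobj (Fn n') end.

Definition bang (x : Imet) : Fobj Imet :=
  match x with
  | iT => @tel Iset ma iT
  | iL => @tel Iset mb iL
  | iR => @tel Iset mc iR
  end.

Fixpoint chain (n : nat) : Fn n -> Fn n.+1 :=
  match n return Fn n -> Fn n.+1 with
  | 0 => bang
  | n'.+1 => @tmap (Fn n') (Fn n'.+1) (@chain n')
  end.

Definition discmet (G : tpset) : tpmet := @TPMet G (@ddisc G).

End Met.
Arguments chain {R} n.

From mathcomp Require Import all_boot all_order all_algebra.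
From mathcomp Require Import boolp classical_sets reals lra.
From Stdlib Require Import Relations.
Import Order.TTheory GRing.Theory Num.Theory.
Local Open Scope ring_scope.

Set Implicit Arguments.

(* Every F^n I is uniformly discrete: distinct points are at distance at least
   2^-n, because a chain between inequivalent representatives must contain a
   step between distinct points, which costs at least half the separation of
   the previous stage.  Hence every map out of F^n I (and out of a discrete
   space) is continuous, so the continuity requirements of Met_3^C are vacuous
   and the colimit in Met_3^C is the colimit in Set_3 with the discrete
   metric. *)

Section Separation.
Variable R : realType.

Definition separated (X : tpmet R) (c : R) : Prop :=
  (forall x y : X, 0 <= mdist x y) /\ (forall x y : X, x <> y -> c <= mdist x y).

Lemma separated_mcont (X Y : tpmet R) (c : R) (f : X -> Y) :
  0 < c -> separated X c -> is_met3 Y -> mcont f.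
Proof.
move=> c_gt0 [_ sepX] [dY0 _ _ _ _] x e e_gt0; exists c => // y dxy.
have [<-|xy] := pselect (x = y); first by rewrite (dY0 _ _).2.
by have := lt_le_trans dxy (sepX x y xy); rewrite ltxx.
Qed.

Lemma discmet_separated (G : tpset) : separated (discmet R G) 1.
Proof.
by split=> x y; rewrite /= /ddisc; case: pselect.
Qed.

Lemma discmet_met3 (G : tpset) : is_set3 G -> is_met3 (discmet R G).
Proof.
case=> TL LR TR; rewrite /is_met3 /= /ddisc.
split=> [x y|x y|x y z|x y|].
- by case: pselect => // xy; split=> // /eqP; rewrite oner_eq0.
- by do 2 case: pselect => //; move=> ? ?; subst.
- case: pselect => /= [_|xz].
    by case: pselect => /= _; case: pselect => /= _; lra.
  case: pselect => /= [xy|_]; last by case: pselect => /= _; lra.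
  by case: pselect => /= [yz|_]; [case: xz; rewrite xy | lra].
- by case: pselect.
- by split; case: pselect.
Qed.

Lemma met3_set3 (Y : tpmet R) : is_met3 Y -> is_set3 Y.
Proof.
case=> d0 _ _ _ [dTL dLR dTR].
by split=> /(d0 _ _).2; rewrite ?dTL ?dLR ?dTR => /eqP; rewrite oner_eq0.
Qed.

Lemma cls_gequiv (X : tpset) (x y : M * X) : gequiv x y -> cls x = cls y.
Proof.
move=> xy; apply/funext => z; apply/propext; split=> /= [xz|yz].
- exact: rst_trans (rst_sym _ _ _ _ xy) xz.
- exact: rst_trans xy yz.
Qed.

Lemma qdist_lb (X : tpmet R) (r : R) (C D : tcar X) :
  (forall x y s, sval C x -> sval D y -> qchain x y s -> r <= qcost s) ->
  r <= qdist C D.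
Proof.
move=> lb; apply: lb_le_inf => [|_ [x [y [s [Cx Dy xy ->]]]]]; last first.
  exact: lb Cx Dy xy.
case: (proj2_sig C) (proj2_sig D) => [x ->] [y ->].
exists (qcost [:: (x, y)]), x, y, [:: (x, y)].
by split=> //=; do ?split; exact: rst_refl.
Qed.

Section Tensor.
Variables (X : tpmet R) (c : R).
Hypotheses (c_le2 : c <= 2) (sepX : separated X c).

Lemma dMX_ge0 (p q : M * X) : 0 <= dMX p q.
Proof.
rewrite /dMX; case: pselect => /= _ //.
by rewrite divr_ge0 //; exact: sepX.1.
Qed.

Lemma dMX_lb (p q : M * X) : p <> q -> c / 2 <= dMX p q.
Proof.
move=> pq; rewrite /dMX; case: pselect => /= [p1q1|_]; last by move: c_le2; lra.
have p2q2 : p.2 <> q.2.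
  by move: p q pq p1q1 => [m x] [n y] /= pq mn xy; apply: pq; rewrite mn xy.
have := sepX.2 _ _ p2q2; lra.
Qed.

Lemma qcost_ge0 (s : seq ((M * X) * (M * X))) : 0 <= qcost s.
Proof. by apply: sumr_ge0 => pq _; exact: dMX_ge0. Qed.

Lemma qcost_cons pq (s : seq ((M * X) * (M * X))) :
  qcost (pq :: s) = dMX pq.1 pq.2 + qcost s.
Proof. by rewrite /qcost big_cons. Qed.

(* A chain either links equivalent endpoints or contains a step between
   distinct points. *)
Lemma qchain_cost_lb (s : seq ((M * X) * (M * X))) (x y : M * X) :
  qchain x y s -> gequiv x y \/ c / 2 <= qcost s.
Proof.
elim: s x y => [|[p q] s IH] x y //=.
have [pq_eq|pq_neq] := pselect (p = q); last first.
  move=> _; right; rewrite qcost_cons.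
  by have := dMX_lb pq_neq; have := qcost_ge0 s; lra.
subst q; case: s IH => [|pq' s] IH /=.
  by case=> xp py; left; exact: rst_trans xp py.
case=> xp /IH [py|cost_lb]; first by left; exact: rst_trans xp py.
by right; rewrite qcost_cons; have := dMX_ge0 p p; lra.
Qed.

Lemma Fobj_separated : separated (Fobj X) (c / 2).
Proof.
split=> [C D|[S [x0 Sx0]] [T [y0 Ty0]] ST];
  apply: qdist_lb => x y s Cx Dy /qchain_cost_lb.
- by move=> _; exact: qcost_ge0.
- case=> // xy; exfalso; apply: ST; apply: eq_exist.
  rewrite /= {}Sx0 {}Ty0 in Cx Dy *.
  by rewrite (cls_gequiv Cx) (cls_gequiv xy) (cls_gequiv Dy).
Qed.

End Tensor.

Lemma Fn_separated (n : nat) : separated (Fn R n) (2^-1 ^+ n).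
Proof.
elim: n => [|n sepFn]; first by rewrite expr0; exact: (discmet_separated Iset).
have c_le2 : 2^-1 ^+ n <= 2 :> R.
  have : 2^-1 ^+ n <= 1 :> R by rewrite exprn_ile1 ?invr_ge0 ?invf_le1 ?ler1n.
  lra.
by rewrite exprSr; exact: Fobj_separated.
Qed.

End Separation.

Theorem mainTheorem2 (R : realType) (G : tpset) (g : forall n : nat, Fn R n -> G) :
  (* (G, g) is the colimit of the initial chain in Set_3 *)
  is_set3 G ->
  (forall n, hom3 (g n)) ->
  (forall n (x : Fn R n), g n x = g n.+1 (chain n x)) ->
  (forall (Y : tpset) (h : forall n : nat, Fn R n -> Y),
     is_set3 Y -> (forall n, hom3 (h n)) ->
     (forall n (x : Fn R n), h n x = h n.+1 (chain n x)) ->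
     exists u : G -> Y, [/\ hom3 u, (forall n (x : Fn R n), u (g n x) = h n x) &
       forall u' : G -> Y, hom3 u' -> (forall n (x : Fn R n), u' (g n x) = h n x) ->
         forall z, u' z = u z]) ->
  (* then (G, d_disc) with the same maps g is the colimit in Met_3^C *)
  [/\ is_met3 (discmet R G),
      (forall n, @mcont R (Fn R n) (discmet R G) (g n)) &
      forall (Y : tpmet R) (h : forall n : nat, Fn R n -> Y),
        is_met3 Y -> (forall n, hom3 (h n) /\ @mcont R (Fn R n) Y (h n)) ->
        (forall n (x : Fn R n), h n x = h n.+1 (chain n x)) ->
        exists u : discmet R G -> Y,
          [/\ hom3 u, @mcont R (discmet R G) Y u,
              (forall n (x : Fn R n), u (g n x) = h n x) &
              forall u' : discmet R G -> Y, hom3 u' -> @mcont R (discmet R G) Y u' ->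
                (forall n (x : Fn R n), u' (g n x) = h n x) -> forall z, u' z = u z]].
Proof.
move=> G3 _ _ g_univ; have G_met3 := discmet_met3 R G3.
split=> // [n|Y h Y3 h_mor h_chain].
  apply: separated_mcont (Fn_separated R n) G_met3.
  by rewrite exprn_gt0 ?invr_gt0.
have [u [u_hom u_g u_uniq]] :=
  g_univ Y h (met3_set3 Y3) (fun n => (h_mor n).1) h_chain.
exists u; split=> //; first exact: separated_mcont (discmet_separated R G) Y3.
by move=> u' u'_hom _ u'_g; exact: u_uniq.
Qed.
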